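(* If $L$ is a finite, simple, modular, complemented lattice, then $\mathsf{C}(L)=\mathsf{Pol}_{0,1}(L)$.
   Context: $L$ has bounds $0,1$. $L$ is simple if its only congruences (compatible equivalence relations) are the identity relation and $L^2$. $L$ is modular if $a\le c$ implies $a\vee(b\wedge c)=(a\vee b)\wedge c$; complemented if every $x$ has $y$ with $x\wedge y=0$, $x\vee y=1$. An $n$-ary aggregation function on $L$ ($n\ge1$) is a nondecreasing map $A:L^n\to L$ with $A(0,\dots,0)=0$, $A(1,\dots,1)=1$; $\mathsf{C}(L)$ is the set of all of them. Polynomials on $L$ are functions $L^n\to L$ built from projections and constants by finitely many pointwise joins and meets; $\mathsf{Pol}_{0,1}(L)$ is the set of polynomials preserving $0$ and $1$. *)

From HB Require Import structures.
From mathcomp Require Import all_boot all_order.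
Set Implicit Arguments. Unset Strict Implicit. Unset Printing Implicit Defensive.
Import Order.TTheory.
Local Open Scope order_scope.

Section LatticeDefs.
Context {disp : Order.disp_t} (L : tbLatticeType disp).

Definition lattice_congruence (R : L -> L -> Prop) : Prop :=
  [/\ (forall x, R x x), (forall x y, R x y -> R y x),
      (forall x y z, R x y -> R y z -> R x z),
      (forall x y x' y', R x x' -> R y y' -> R (x `|` y) (x' `|` y')) &
      (forall x y x' y', R x x' -> R y y' -> R (x `&` y) (x' `&` y'))].

Definition simple_lattice : Prop :=
  forall R : L -> L -> Prop, lattice_congruence R ->
    (forall x y, R x y <-> x = y) \/ (forall x y, R x y).

Definition modular_lattice : Prop :=
  forall a b c : L, a <= c -> a `|` (b `&` c) = (a `|` b) `&` c.

Definition complemented_lattice : Prop :=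
  forall x : L, exists y : L, x `&` y = \bot /\ x `|` y = \top.

Definition aggregation_function (n : nat) (A : ('I_n -> L) -> L) : Prop :=
  [/\ (forall x y : 'I_n -> L, (forall i, x i <= y i) -> A x <= A y),
      A (fun _ => \bot) = \bot &
      A (fun _ => \top) = \top].

Inductive lpoly_term (n : nat) : Type :=
  | LPVar of 'I_n
  | LPConst of L
  | LPJoin of lpoly_term n & lpoly_term n
  | LPMeet of lpoly_term n & lpoly_term n.

Fixpoint lpoly_eval (n : nat) (t : lpoly_term n) (x : 'I_n -> L) : L :=
  match t with
  | LPVar i => x i
  | LPConst c => c
  | LPJoin t1 t2 => lpoly_eval t1 x `|` lpoly_eval t2 x
  | LPMeet t1 t2 => lpoly_eval t1 x `&` lpoly_eval t2 x
  end.

Definition is_polynomial (n : nat) (f : ('I_n -> L) -> L) : Prop :=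
  exists t : lpoly_term n, forall x, f x = lpoly_eval t x.

Definition pol01 (n : nat) (f : ('I_n -> L) -> L) : Prop :=
  [/\ is_polynomial f, f (fun _ => \bot) = \bot & f (fun _ => \top) = \top].

End LatticeDefs.

(* In a simple lattice, any a with ~ a <= b is mapped to \top while b is mapped
   to \bot by some unary polynomial: otherwise "p x = \bot <-> p y = \bot for
   every unary polynomial p" would be a congruence identifying b and a `|` b but
   not \bot and \top.  Reaching \top rather than merely a nonzero value is where
   modularity and complements enter: if k is the largest value s u over unary
   polynomials s with s \bot = \bot, then \bot and k are identified by the
   congruence of "p x `|` k = p y `|` k", so simplicity forces k = \top.
   Meets of such separating polynomials give, for every tuple a, a polynomial
   indicator of the principal filter of a, and a monotone f is the join over
   all tuples a of f a `&` [a <= x]. *)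
From HB Require Import structures.
From mathcomp Require Import all_boot all_order.
From Stdlib Require Import Classical.
Set Implicit Arguments. Unset Strict Implicit. Unset Printing Implicit Defensive.
Import Order.TTheory.
Local Open Scope order_scope.

Lemma join_closed_greatest disp (T : finLatticeType disp) (P : T -> Prop) x0 :
  P x0 -> (forall x y, P x -> P y -> P (x `|` y)) ->
  exists2 k, P k & forall y, P y -> y <= k.
Proof.
move=> Px0 PU.
suff [k Pk le_k] : exists2 k, P k & forall y, y \in enum T -> P y -> y <= k.
  by exists k => // y; apply: le_k; rewrite mem_enum.
elim: (enum T) => [|y s [k Pk le_k]]; first by exists x0.
have [Py|nPy] := classic (P y).
  exists (k `|` y); first exact: PU.
  move=> z; rewrite inE => /orP[/eqP-> _|zs Pz]; first exact: leUr.
  exact/(le_trans (le_k z zs Pz))/leUl.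
by exists k => // z; rewrite inE => /orP[/eqP-> /nPy|] //; exact: le_k.
Qed.

Section Polynomials.
Context {disp : Order.disp_t} (L : tbLatticeType disp).

Lemma lpoly_eval_mono n (t : lpoly_term L n) (x y : 'I_n -> L) :
  (forall i, x i <= y i) -> lpoly_eval t x <= lpoly_eval t y.
Proof. by move=> le_xy; elim: t => //= t1 le1 t2 le2; [exact: leU2 | exact: leI2]. Qed.

Lemma polynomial_mono n (f : ('I_n -> L) -> L) (x y : 'I_n -> L) :
  is_polynomial f -> (forall i, x i <= y i) -> f x <= f y.
Proof. by case=> t ft le_xy; rewrite !ft; exact: lpoly_eval_mono. Qed.

Lemma polynomial_ext n (f g : ('I_n -> L) -> L) :
  is_polynomial f -> f =1 g -> is_polynomial g.
Proof. by case=> t ft fg; exists t => x; rewrite -fg. Qed.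

Lemma polynomial_const n (c : L) : is_polynomial (fun _ : 'I_n -> L => c).
Proof. by exists (LPConst n c). Qed.

Lemma polynomial_var n (i : 'I_n) : is_polynomial (fun x : 'I_n -> L => x i).
Proof. by exists (LPVar L i). Qed.

Lemma polynomial_join n (f g : ('I_n -> L) -> L) :
  is_polynomial f -> is_polynomial g -> is_polynomial (fun x => f x `|` g x).
Proof. by case=> t ft [u gu]; exists (LPJoin t u) => x /=; rewrite ft gu. Qed.

Lemma polynomial_meet n (f g : ('I_n -> L) -> L) :
  is_polynomial f -> is_polynomial g -> is_polynomial (fun x => f x `&` g x).
Proof. by case=> t ft [u gu]; exists (LPMeet t u) => x /=; rewrite ft gu. Qed.

Lemma polynomial_bigmeet n (I : Type) (r : seq I) (F : I -> ('I_n -> L) -> L) :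
  (forall i, is_polynomial (F i)) -> is_polynomial (fun x => \meet_(i <- r) F i x).
Proof.
move=> polyF; elim: r => [|i r IH].
  by apply: polynomial_ext (polynomial_const n \top) _ => x; rewrite big_nil.
by apply: polynomial_ext (polynomial_meet (polyF i) IH) _ => x; rewrite big_cons.
Qed.

Lemma polynomial_bigjoin n (I : Type) (r : seq I) (F : I -> ('I_n -> L) -> L) :
  (forall i, is_polynomial (F i)) -> is_polynomial (fun x => \join_(i <- r) F i x).
Proof.
move=> polyF; elim: r => [|i r IH].
  by apply: polynomial_ext (polynomial_const n \bot) _ => x; rewrite big_nil.
by apply: polynomial_ext (polynomial_join (polyF i) IH) _ => x; rewrite big_cons.
Qed.

Fixpoint lpoly_subst1 n (t : lpoly_term L 1) (s : lpoly_term L n) : lpoly_term L n :=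
  match t with
  | LPVar _ => s
  | LPConst c => LPConst n c
  | LPJoin t1 t2 => LPJoin (lpoly_subst1 t1 s) (lpoly_subst1 t2 s)
  | LPMeet t1 t2 => LPMeet (lpoly_subst1 t1 s) (lpoly_subst1 t2 s)
  end.

Lemma lpoly_eval_subst1 n (t : lpoly_term L 1) (s : lpoly_term L n) x :
  lpoly_eval (lpoly_subst1 t s) x = lpoly_eval t (fun _ => lpoly_eval s x).
Proof. by elim: t => //= t1 -> t2 ->. Qed.

Definition upoly (p : L -> L) := is_polynomial (fun x : 'I_1 -> L => p (x ord0)).

Lemma polynomial_comp n (p : L -> L) (f : ('I_n -> L) -> L) :
  upoly p -> is_polynomial f -> is_polynomial (fun x => p (f x)).
Proof.
case=> t pt [u fu]; exists (lpoly_subst1 t u) => x.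
by rewrite lpoly_eval_subst1 -fu -(pt (fun _ => f x)).
Qed.

Lemma upoly_id : upoly id.
Proof. exact: polynomial_var. Qed.

Lemma upoly_const (c : L) : upoly (fun _ => c).
Proof. exact: polynomial_const. Qed.

Lemma upoly_comp (p q : L -> L) : upoly p -> upoly q -> upoly (fun y => p (q y)).
Proof. exact: polynomial_comp. Qed.

Lemma upoly_join (p q : L -> L) : upoly p -> upoly q -> upoly (fun y => p y `|` q y).
Proof. exact: polynomial_join. Qed.

Lemma upoly_meet (p q : L -> L) : upoly p -> upoly q -> upoly (fun y => p y `&` q y).
Proof. exact: polynomial_meet. Qed.

Lemma upoly_mono (p : L -> L) (x y : L) : upoly p -> x <= y -> p x <= p y.
Proof. by move=> pp le_xy; exact: (polynomial_mono (x := fun=> x) (y := fun=> y) pp). Qed.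

(* The largest congruence contained in the kernel of G. *)
Definition upoly_ker (T : Type) (G : L -> T) (x y : L) : Prop :=
  forall p, upoly p -> G (p x) = G (p y).

Lemma upoly_ker_congruence (T : Type) (G : L -> T) : lattice_congruence (upoly_ker G).
Proof.
split.
- by [].
- by move=> x y kxy p pp; rewrite kxy.
- by move=> x y z kxy kyz p pp; rewrite kxy // kyz.
- move=> x y x' y' kx ky p pp.
  rewrite (kx (fun z => p (z `|` y))); last exact/upoly_comp/upoly_join/upoly_const/upoly_id.
  exact: (ky (fun z => p (x' `|` z)) (upoly_comp pp (upoly_join (upoly_const x') upoly_id))).
- move=> x y x' y' kx ky p pp.
  rewrite (kx (fun z => p (z `&` y))); last exact/upoly_comp/upoly_meet/upoly_const/upoly_id.
  exact: (ky (fun z => p (x' `&` z)) (upoly_comp pp (upoly_meet (upoly_const x') upoly_id))).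
Qed.

End Polynomials.

Section SimpleModularComplemented.
Context {disp : Order.disp_t} (L : finTBLatticeType disp).
Hypothesis simpleL : simple_lattice L.
Hypothesis modularL : modular_lattice L.
Hypothesis complementedL : complemented_lattice L.

Lemma simple_upoly_ker (T : Type) (G : L -> T) (x y : L) :
  upoly_ker G x y -> G \bot <> G \top -> x = y.
Proof.
move=> kxy G01; case: (simpleL (upoly_ker_congruence G)) => [ker_eq|ker_all].
  exact/ker_eq.
by case: G01; exact: (ker_all _ _ id (upoly_id L)).
Qed.

Lemma upoly_join_absorb (k : L) :
  (forall s, upoly s -> s \bot = \bot -> s k <= k) ->
  upoly_ker (fun z => z `|` k) \bot k.
Proof.
move=> s_k p pp; have [c [pc0 pc1]] := complementedL (p \bot).
have pkc : p k `&` c <= k.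
  by apply: (s_k (fun y => p y `&` c)); [exact: upoly_meet pp (upoly_const c) | rewrite pc0].
have p0k : p \bot <= p k by exact: upoly_mono pp (le0x k).
have pk_split : p k = p \bot `|` (c `&` p k) by rewrite modularL // pc1 meet1x.
apply/le_anti; rewrite (leU2 p0k (lexx k)) /= leUx leUr andbT {1}pk_split leUx leUl /=.
by rewrite meetC (le_trans pkc) ?leUr.
Qed.

Lemma upoly_raise (u : L) : u != \bot ->
  exists s, [/\ upoly s, s \bot = \bot & s u = \top].
Proof.
move=> u0.
pose reach k := exists s, [/\ upoly s, s \bot = \bot & s u = k].
have reach_u : reach u by exists id; split=> //; exact: upoly_id.
have reachU k1 k2 : reach k1 -> reach k2 -> reach (k1 `|` k2).
  move=> [s1 [ps1 s10 s1u]] [s2 [ps2 s20 s2u]].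
  exists (fun y => s1 y `|` s2 y); rewrite s10 s20 s1u s2u joinxx.
  by split=> //; exact: upoly_join.
have [k reach_k k_max] := join_closed_greatest reach_u reachU.
have s_k s : upoly s -> s \bot = \bot -> s k <= k.
  move=> ps s0; apply: k_max; case: reach_k => t [pt t0 tu].
  by exists (fun y => s (t y)); rewrite t0 s0 tu; split=> //; exact: upoly_comp.
have [k1|k_ne1] := eqVneq k \top; first by move: reach_k; rewrite k1.
have k0 : \bot = k.
  apply: simple_upoly_ker (upoly_join_absorb s_k) _.
  by rewrite join0x joinC joinx1; exact/eqP.
by move: u0; rewrite -lex0 k0 k_max.
Qed.

Lemma upoly_separate (a b : L) : ~~ (a <= b) ->
  exists r, [/\ upoly r, r a = \top & r b = \bot].
Proof.
move=> nab.
have top_ne0 : \top != \bot :> L.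
  by apply: contraNneq nab => top0; rewrite (le_trans (lex1 a)) // top0 le0x.
have bot_top : (\bot == \bot :> L) <> (\top == \bot :> L) by rewrite eqxx (negbTE top_ne0).
have [p pp pb_ne] : exists2 p, upoly p & (p b == \bot) <> (p (a `|` b) == \bot).
  apply: NNPP => no_p; apply: (negP nab).
  have -> : b = a `|` b.
    apply: (simple_upoly_ker (G := fun z : L => z == \bot) _ bot_top) => p pp.
    by apply: NNPP => ne; apply: no_p; exists p.
  exact: leUl.
have pb_le : p b <= p (a `|` b) by exact: upoly_mono pp (leUr b a).
have pab0 : p (a `|` b) != \bot.
  by apply/eqP => pab0; apply: pb_ne; rewrite pab0 eqxx -lex0 -pab0 pb_le.
have pb0 : p b = \bot by apply/eqP; move: pb_ne; rewrite (negbTE pab0); case: (_ == _).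
have [s [ps s0 s1]] := upoly_raise pab0.
exists (fun z => s (p (z `|` b))); split=> //; last by rewrite joinxx pb0.
exact/upoly_comp/upoly_comp/upoly_join/upoly_const/upoly_id.
Qed.

Lemma upoly_indicator (c : L) :
  exists2 p, upoly p & forall y, p y = if c <= y then \top else \bot.
Proof.
have : forall b, exists2 r, upoly r & r c = \top /\ (~~ (c <= b) -> r b = \bot).
  move=> b; have [cb|ncb] := boolP (c <= b).
    by exists (fun=> \top); [exact: upoly_const | split].
  by have [r [pr rc rb]] := upoly_separate ncb; exists r.
case/fin_all_exists2 => r pr r_sep.
exists (fun y => \meet_(b : L) r b y); first exact: polynomial_bigmeet pr.
move=> y; have [cy|ncy] := boolP (c <= y).
  apply/eqP; rewrite -le1x; apply/meetsP => b _.
  by rewrite -(r_sep b).1; exact: upoly_mono.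
by apply/eqP; rewrite -lex0 (meets_max (j := y)) // (r_sep y).2.
Qed.

Lemma polynomial_indicator n (a : 'I_n -> L) : exists2 g, is_polynomial g &
  forall x, g x = if [forall i, a i <= x i] then \top else \bot.
Proof.
have [ind pind ind_val] := fin_all_exists2 upoly_indicator.
exists (fun x => \meet_i ind (a i) (x i)).
  apply: polynomial_bigmeet => i; apply: polynomial_comp; [exact: pind | exact: polynomial_var].
move=> x; case: ifP => [/forallP ax|/negbT].
  by apply: big1 => i _; rewrite ind_val ax.
rewrite negb_forall => /existsP[i nai].
by apply/eqP; rewrite -lex0 (meets_max (j := i)) // ind_val (negbTE nai).
Qed.

Lemma monotone_polynomial n (f : ('I_n -> L) -> L) :
  (forall x y, (forall i, x i <= y i) -> f x <= f y) -> is_polynomial f.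
Proof.
move=> f_mono.
have [g pg g_val] := fin_all_exists2 (fun a : {ffun 'I_n -> L} => polynomial_indicator a).
apply: (polynomial_ext (f := fun x => \join_(a : {ffun 'I_n -> L}) (f a `&` g a x))).
  by apply: polynomial_bigjoin => a; exact: polynomial_meet (polynomial_const _ _) (pg a).
move=> x; apply/le_anti/andP; split.
  apply/joinsP => a _; rewrite g_val; case: ifP => [/forallP a_x|_].
    by rewrite meetx1; exact: f_mono.
  by rewrite meetx0 le0x.
apply: (joins_min (j := finfun x)) => //; rewrite g_val.
have -> : [forall i, finfun x i <= x i] by apply/forallP => i; rewrite ffunE.
by rewrite meetx1; apply: f_mono => i; rewrite ffunE.
Qed.

End SimpleModularComplemented.

Theorem mainTheorem7 (disp : Order.disp_t) (L : finTBLatticeType disp) :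
  simple_lattice L -> modular_lattice L -> complemented_lattice L ->
  forall (n : nat), (0 < n)%N ->
  forall f : ('I_n -> L) -> L, aggregation_function f <-> pol01 f.
Proof.
move=> simpleL modularL complementedL n _ f; split.
  by case=> f_mono f0 f1; split=> //; exact: (monotone_polynomial simpleL modularL complementedL).
by case=> pf f0 f1; split=> // x y; exact: polynomial_mono.
Qed.
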